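(* For any constant $\epsilon\in(0,1)$, any $\alpha\in(0,1)$ and any $\rho\ge1$, IPR is a $(1+\epsilon)(1+\alpha)$-consistent partitioning algorithm.
   Context: Scheduling with Speed Predictions (SSP). An instance consists of $n$ jobs with processing times $p_1,\dots,p_n\ge0$ and $m$ machines with true speeds $s_1,\dots,s_m>0$; job $j$ on machine $i$ takes time $p_j/s_i$. For a bag $B$, $p(B)=\sum_{j\in B}p_j$. In the partitioning stage the algorithm receives $\mathbf p$ and predicted speeds $\hat{\mathbf s}\ge0$ (not $\mathbf s$) and partitions $[n]$ into $m$ possibly empty bags. In the scheduling stage $\mathbf s$ is revealed and each bag is assigned whole to a machine; the makespan is $\max_i(\text{total processing time on } i)/s_i$. $opt(\mathbf p,\mathbf s)$ is the minimum makespan of assigning individual jobs knowing $\mathbf s$. A partitioning algorithm is $c$-consistent if the two-stage algorithm that runs it and then assigns the bags to the machines with minimum possible makespan has makespan at most $c\cdot opt(\mathbf p,\mathbf s)$ whenever $\hat{\mathbf s}=\mathbf s$. Algorithm IPR. Input: predicted speeds $\hat s_1\ge\dots\ge\hat s_m$, $\mathbf p$, $\alpha$, accuracy $\epsilon\in(0,1)$, $\rho\ge1$. (1) Compute a partition $B_1,\dots,B_m$ with $p(B_1)\ge\dots\ge p(B_m)$ such that putting $B_i$ on machine $i$ has makespan at most $(1+\epsilon)opt(\mathbf p,\hat{\mathbf s})$ under speeds $\hat{\mathbf s}$. (2) Set $\overline{OPT}_C=\max_i p(B_i)/\hat s_i$ and $\mathcal M_i=\{B_i\}$. (3) While $\max\{p(B):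 B\in\cup_i\mathcal M_i, |B|\ge2\}>\rho\min\{p(B):B\in\cup_i\mathcal M_i\}$: compute $\mathcal M'=$ LPT-Rebalance$(\mathcal M)$; if $\max_i\sum_{B\in\mathcal M'_i}p(B)/\hat s_i>(1+\alpha)\overline{OPT}_C$ return the current bags $\cup_i\mathcal M_i$; else $\mathcal M\leftarrow\mathcal M'$. (4) Return the bags $\cup_i\mathcal M_i$. LPT-Rebalance: let $B_{\min}$ be a bag of minimum $p(B)$ over all bags, $\mathcal M_{\min}$ its collection, $\mathcal M_{\max}$ a collection containing a bag of maximum $p(B)$ among bags with at least two jobs. Move $B_{\min}$ into $\mathcal M_{\max}$, let $\ell=|\mathcal M_{\max}|$, pool its jobs and redistribute them into $\ell$ new bags by LPT (jobs in non-increasing processing time, each into a currently least-loaded bag); these form the new $\mathcal M_{\max}$. *)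

From HB Require Import structures.
From mathcomp Require Import all_boot all_order all_algebra.
Set Implicit Arguments. Unset Strict Implicit. Unset Printing Implicit Defensive.
Import Order.TTheory GRing.Theory Num.Theory.
Local Open Scope ring_scope.

Section SSP.
Variable R : realFieldType.

Definition load {k m : nat} (w : 'I_k -> R) (tau : {ffun 'I_k -> 'I_m}) (i : 'I_m) : R :=
  \sum_(b < k | tau b == i) w b.

Definition makespan {k m : nat} (w : 'I_k -> R) (s : 'I_m -> R)
    (tau : {ffun 'I_k -> 'I_m}) : R :=
  \big[Num.max/0]_(i < m) (load w tau i / s i).

(* minimum of a list (0 on the empty list) *)
Definition minlist (l : seq R) : R := foldr Num.min (head 0 l) l.

Definition opt_assign {k m : nat} (w : 'I_k -> R) (s : 'I_m -> R) : R :=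
  minlist [seq makespan w s tau | tau <- enum {ffun 'I_k -> 'I_m}].

Definition opt {n m : nat} (p : 'I_n -> R) (s : 'I_m -> R) : R := opt_assign p s.

Definition pB {n : nat} (p : 'I_n -> R) (B : {set 'I_n}) : R := \sum_(j in B) p j.

Definition bag_opt {n m : nat} (p : 'I_n -> R) (s : 'I_m -> R) (bags : seq {set 'I_n}) : R :=
  opt_assign (fun b : 'I_(size bags) => pB p (nth set0 bags b)) s.

Variables (n m : nat) (p : 'I_n -> R) (sh : 'I_m -> R).

Definition state := 'I_m -> seq {set 'I_n}.

Definition bags_of (M : state) : seq {set 'I_n} := flatten [seq M i | i <- enum 'I_m].

Definition min_bag (M : state) : R :=
  \big[Num.min/pB p (head set0 (bags_of M))]_(B <- bags_of M) pB p B.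

(* max {p(B) : |B| >= 2} (0 if there is no such bag) *)
Definition max_big_bag (M : state) : R :=
  \big[Num.max/0]_(B <- bags_of M | (2 <= #|B|)%N) pB p B.

Definition loop_cond (rho : R) (M : state) : bool := rho * min_bag M < max_big_bag M.

Definition coll_makespan (M : state) : R :=
  \big[Num.max/0]_(i < m) ((\sum_(B <- M i) pB p B) / sh i).

(* One LPT step: put job j into a currently least-loaded bag (ties arbitrary). *)
Inductive lpt_run : seq 'I_n -> seq {set 'I_n} -> seq {set 'I_n} -> Prop :=
| lpt_nil bs : lpt_run [::] bs bs
| lpt_cons j js bs k res :
    (k < size bs)%N ->
    (forall k', (k' < size bs)%N -> pB p (nth set0 bs k) <= pB p (nth set0 bs k')) ->
    lpt_run js (set_nth set0 bs k (j |: nth set0 bs k)) res ->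
    lpt_run (j :: js) bs res.

Definition LPT (J : {set 'I_n}) (l : nat) (res : seq {set 'I_n}) : Prop :=
  exists js : seq 'I_n,
    [/\ perm_eq js (enum J), sorted (fun a b => p b <= p a) js
      & lpt_run js (nseq l set0) res].

Definition rem_at (k : nat) (s : seq {set 'I_n}) := take k s ++ drop k.+1 s.

(* LPT-Rebalance (as a relation, all tie-breaking choices allowed). *)
Definition LPT_rebalance (M M' : state) : Prop :=
  exists (imin : 'I_m) (kmin : nat) (imax : 'I_m) (kmax : nat) (res : seq {set 'I_n}),
    let Bmin := nth set0 (M imin) kmin in
    let Bmax := nth set0 (M imax) kmax in
    let Mrem := fun i => if i == imin then rem_at kmin (M i) else M i in
    let C := Bmin :: Mrem imax in
    [/\ (kmin < size (M imin))%N,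
        (forall B, B \in bags_of M -> pB p Bmin <= pB p B) &
     [/\ (kmax < size (M imax))%N, (2 <= #|Bmax|)%N,
        (forall B, B \in bags_of M -> (2 <= #|B|)%N -> pB p B <= pB p Bmax),
        LPT (\bigcup_(B <- C) B) (size C) res
      & forall i, M' i = if i == imax then res else Mrem i]].

(* Step (3): the while loop; ipr_loop M out means that the loop, started in
   state M, can terminate returning the bags out. *)
Inductive ipr_loop (alpha rho OPTC : R) : state -> seq {set 'I_n} -> Prop :=
| loop_stop M : ~~ loop_cond rho M -> ipr_loop alpha rho OPTC M (bags_of M)
| loop_reject M M' : loop_cond rho M -> LPT_rebalance M M' ->
    (1 + alpha) * OPTC < coll_makespan M' -> ipr_loop alpha rho OPTC M (bags_of M)
| loop_accept M M' out : loop_cond rho M -> LPT_rebalance M M' ->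
    coll_makespan M' <= (1 + alpha) * OPTC ->
    ipr_loop alpha rho OPTC M' out -> ipr_loop alpha rho OPTC M out.

(* IPR p sh alpha eps rho out: some run of IPR outputs the bags out. *)
Definition IPR (alpha eps rho : R) (out : seq {set 'I_n}) : Prop :=
  exists B : 'I_m -> {set 'I_n},
    [/\ (forall j, exists i, j \in B i),
        (forall i i', i != i' -> [disjoint B i & B i']),
        (forall i i' : 'I_m, (i <= i')%N -> pB p (B i') <= pB p (B i)),
        \big[Num.max/0]_(i < m) (pB p (B i) / sh i) <= (1 + eps) * opt p sh
      & ipr_loop alpha rho (\big[Num.max/0]_(i < m) (pB p (B i) / sh i))
                 (fun i => [:: B i]) out].

End SSP.

From HB Require Import structures.
From mathcomp Require Import all_boot all_order all_algebra.
Import Order.TTheory GRing.Theory Num.Theory.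
Local Open Scope ring_scope.
Set Implicit Arguments. Unset Strict Implicit.

(* Consistency is an invariant of the loop: the initial collections have
   makespan C := max_i p(B_i)/s_i <= (1 + eps) opt, and a rebalancing step is
   accepted only if the new collections have makespan at most (1 + alpha) C.
   Whatever state the loop stops in, putting every bag on the machine of its
   collection is a valid schedule of the output bags, so the best schedule of
   those bags is no worse. *)

Section TaggedBags.
Variables (n m : nat) (M : state n m).

Definition tagged_bags : seq ('I_m * {set 'I_n}) :=
  flatten [seq [seq (i, B) | B <- M i] | i <- enum 'I_m].

Lemma unzip2_tagged_bags : unzip2 tagged_bags = bags_of M.
Proof.
rewrite /unzip2 /tagged_bags /bags_of map_flatten -map_comp; congr flatten.
by apply: eq_map => i /=; rewrite -map_comp map_id.
Qed.

Lemma size_tagged_bags : size (bags_of M) = size tagged_bags.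
Proof. by rewrite -unzip2_tagged_bags size_map. Qed.

Definition tagged_bag (b : 'I_(size (bags_of M))) : 'I_m * {set 'I_n} :=
  tnth (in_tuple tagged_bags) (cast_ord size_tagged_bags b).

Definition machine_of_bag : {ffun 'I_(size (bags_of M)) -> 'I_m} :=
  [ffun b => (tagged_bag b).1].

Lemma nth_bags_of (b : 'I_(size (bags_of M))) :
  nth set0 (bags_of M) b = (tagged_bag b).2.
Proof.
rewrite /tagged_bag (tnth_nth (tagged_bag b)) /= -(nth_map _ set0 snd).
  by rewrite [map _ _]unzip2_tagged_bags.
by rewrite -size_tagged_bags.
Qed.

Lemma sum_tagged_bags (R : nmodType) (F : {set 'I_n} -> R) (i : 'I_m) :
  \sum_(x <- tagged_bags | x.1 == i) F x.2 = \sum_(B <- M i) F B.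
Proof.
rewrite big_flatten /= big_map (bigD1_seq i) ?mem_enum ?enum_uniq //= big_map /=.
rewrite eqxx [X in _ + X]big1 ?addr0 // => j ji.
by rewrite big_map big1 // => B /= jiE; rewrite jiE in ji.
Qed.

End TaggedBags.

Section BagSchedules.
Variable R : realFieldType.

Lemma minlist_le (l : seq R) (x : R) : x \in l -> minlist l <= x.
Proof.
rewrite /minlist; elim: l (head 0 l) => [//|y l IHl] a /=.
rewrite in_cons ge_min => /predU1P [->|xl]; first by rewrite lexx.
by rewrite IHl ?orbT.
Qed.

Lemma opt_assign_le_makespan (k m : nat) (w : 'I_k -> R) (s : 'I_m -> R)
    (tau : {ffun 'I_k -> 'I_m}) :
  opt_assign w s <= makespan w s tau.
Proof. by apply: minlist_le; apply: map_f; rewrite mem_enum. Qed.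

Variables (n m : nat) (p : 'I_n -> R) (s : 'I_m -> R).

Lemma load_machine_of_bag (M : state n m) (i : 'I_m) :
  load (fun b => pB p (nth set0 (bags_of M) b)) (machine_of_bag M) i
  = \sum_(B <- M i) pB p B.
Proof.
rewrite -(sum_tagged_bags M (pB p)) big_tnth /load.
rewrite (reindex (cast_ord (size_tagged_bags M))) /=; last first.
  by exists (cast_ord (esym (size_tagged_bags M))) => b _;
    rewrite ?cast_ordK ?cast_ordKV.
by apply: eq_big => b; rewrite ?ffunE // nth_bags_of.
Qed.

Lemma makespan_machine_of_bag (M : state n m) :
  makespan (fun b => pB p (nth set0 (bags_of M) b)) s (machine_of_bag M)
  = coll_makespan p s M.
Proof. by apply: eq_bigr => i _; rewrite load_machine_of_bag. Qed.

Lemma bag_opt_bags_of_le (M : state n m) :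
  bag_opt p s (bags_of M) <= coll_makespan p s M.
Proof. by rewrite -makespan_machine_of_bag; apply: opt_assign_le_makespan. Qed.

Lemma ipr_loop_bag_opt_le (alpha rho C : R) (M : state n m) out :
  ipr_loop p s alpha rho C M out ->
  coll_makespan p s M <= (1 + alpha) * C -> bag_opt p s out <= (1 + alpha) * C.
Proof.
elim=> [M0 _ M0_ok|M0 M1 _ _ _ M0_ok|M0 M1 out1 _ _ M1_ok _ IH _].
- exact: le_trans (bag_opt_bags_of_le M0) M0_ok.
- exact: le_trans (bag_opt_bags_of_le M0) M0_ok.
- exact: IH M1_ok.
Qed.

Lemma coll_makespan_singletons (B : 'I_m -> {set 'I_n}) :
  coll_makespan p s (fun i => [:: B i]) = \big[Num.max/0]_(i < m) (pB p (B i) / s i).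
Proof. by apply: eq_bigr => i _; rewrite big_seq1. Qed.

End BagSchedules.

Theorem lemma1 (R : realFieldType) (eps alpha rho : R) :
  0 < eps < 1 -> 0 < alpha < 1 -> 1 <= rho ->
  forall (n m : nat) (p : 'I_n -> R) (s : 'I_m -> R),
    (forall j, 0 <= p j) ->
    (forall i, 0 < s i) ->
    (forall i i' : 'I_m, (i <= i')%N -> s i' <= s i) ->
    forall out : seq {set 'I_n},
      IPR p s alpha eps rho out ->
      bag_opt p s out <= (1 + eps) * (1 + alpha) * opt p s.
Proof.
move=> _ /andP [alpha_gt0 _] _ n m p s _ _ _ out.
case=> B [_ _ _ C_le_opt run].
set C := \big[Num.max/0]_(i < m) _ in C_le_opt run.
(* C >= 0 because the maximum is seeded with 0. *)
have C_ge0 : 0 <= C.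
  by rewrite /C; elim/big_rec: _ => // i x _ x_ge0; rewrite le_max x_ge0 orbT.
have alpha1_ge0 : 0 <= 1 + alpha by rewrite addr_ge0 // ltW.
apply: le_trans (ipr_loop_bag_opt_le run _) _.
  by rewrite coll_makespan_singletons -/C mulrDl mul1r lerDl mulr_ge0 // ltW.
by rewrite [(1 + eps) * _]mulrC -mulrA ler_wpM2l.
Qed.
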